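(* Let $\alpha\in(0,1)$ be irrational. (i) For every $n\in\mathbb N_0$ there exists a unique $(n,\alpha)$-partition of $v_{\alpha,0}$. (ii) For every $n\in\mathbb N_0$ and every $\theta\in[0,1)$ there exists a unique $(n,\alpha)$-partition of $v_{\alpha,\theta}$.
   Context: $\mathbb N_0=\{0,1,2,\ldots\}$. $v_{\alpha,\theta}(k)=\chi_{[1-\alpha,1)}(k\alpha+\theta \bmod 1)$, $k\in\mathbb Z$. With $\alpha=[a_1,a_2,\ldots]$ the continued fraction expansion ($a_n\in\mathbb N$), the words over $\{0,1\}$ are $s_{-1}=1$, $s_0=0$, $s_1=s_0^{a_1-1}s_{-1}$, $s_n=s_{n-1}^{a_n}s_{n-2}$ ($n\ge2$). For $n\in\mathbb N_0$, an $(n,\alpha)$-partition of a sequence $(f_k)_{k\in\mathbb Z}$ with $f_k\in\{0,1\}$ is a sequence $(I_j,z_j)_{j\in\mathbb Z}$ where $I_j=\{d_j,d_j+1,\ldots,d_{j+1}-1\}\subset\mathbb Z$ (with integers $d_j<d_{j+1}$), $z_j\in\{s_n,s_{n-1}\}$, $0\in I_0$, and $f_{d_j}f_{d_j+1}\cdots f_{d_{j+1}-1}=z_j$ for all $j\in\mathbb Z$. (Thus the $I_j$ tile $\mathbb Z$ and $f$ is the concatenation of the blocks $z_j$.) *)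

From Stdlib Require Import Reals Lra Lia ZArith List.
Open Scope R_scope.

(* floor and fractional part: Int_part x = up x - 1 = floor x *)
Definition floorR (x : R) : Z := Int_part x.
Definition fracR (x : R) : R := x - IZR (floorR x).

Definition irrational (x : R) : Prop :=
  ~ exists p q : Z, q <> 0%Z /\ x = IZR p / IZR q.

Definition v (alpha theta : R) (k : Z) : nat :=
  let t := fracR (IZR k * alpha + theta) in
  if Rle_dec (1 - alpha) t then (if Rlt_dec t 1 then 1%nat else 0%nat) else 0%nat.

(* Continued fraction expansion alpha = [a_1, a_2, ...] via the Gauss map:
   cf_rem 0 = alpha, cf_rem (m+1) = frac (1 / cf_rem m),
   a_n = floor (1 / cf_rem (n-1))  for n >= 1. *)
Fixpoint cf_rem (alpha : R) (m : nat) : R :=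
  match m with
  | O => alpha
  | S m' => fracR (1 / cf_rem alpha m')
  end.

Definition cf_digit (alpha : R) (n : nat) : nat :=
  Z.to_nat (floorR (1 / cf_rem alpha (pred n))).

Definition word := list nat.

Fixpoint wpow (w : word) (k : nat) : word :=
  match k with O => nil | S k' => w ++ wpow w k' end.

(* s_pair alpha n = (s_{n-1}, s_n), with s_{-1} = 1, s_0 = 0,
   s_1 = s_0^{a_1 - 1} s_{-1}, s_n = s_{n-1}^{a_n} s_{n-2} (n >= 2). *)
Fixpoint s_pair (alpha : R) (n : nat) : word * word :=
  match n with
  | O => (1%nat :: nil, 0%nat :: nil)
  | S O => (0%nat :: nil, wpow (0%nat :: nil) (cf_digit alpha 1 - 1) ++ (1%nat :: nil))
  | S m => let (p, q) := s_pair alpha m in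
           (q, wpow q (cf_digit alpha n) ++ p)
  end.

Definition s (alpha : R) (n : nat) : word := snd (s_pair alpha n).
Definition s_prev (alpha : R) (n : nat) : word := fst (s_pair alpha n).

(* (n,alpha)-partition of f : Z -> {0,1}, given by the left endpoints d_j
   (I_j = {d_j, ..., d_{j+1}-1}) and the words z_j. *)
Definition is_partition (n : nat) (alpha : R) (f : Z -> nat)
    (d : Z -> Z) (z : Z -> word) : Prop :=
  (forall j : Z, (d j < d (j + 1))%Z) /\
  (forall j : Z, z j = s alpha n \/ z j = s_prev alpha n) /\
  (d 0 <= 0 < d 1)%Z /\
  (forall j : Z,
     Z.of_nat (length (z j)) = (d (j + 1) - d j)%Z /\
     forall i : nat, (i < length (z j))%nat ->
       f (d j + Z.of_nat i)%Z = nth i (z j) 0%nat).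

Definition unique_partition (n : nat) (alpha : R) (f : Z -> nat) : Prop :=
  (exists d z, is_partition n alpha f d z) /\
  (forall d z d' z', is_partition n alpha f d z -> is_partition n alpha f d' z' ->
     (forall j, d j = d' j) /\ (forall j, z j = z' j)).

From Stdlib Require Import Reals Lra Lia ZArith List Classical.
Open Scope R_scope.

(* At level n the sequence is cut into tiles s_n and s_(n-1), the j-th tile being s_(n-1)
   exactly when the j-th point of a circle rotation lies in a marked interval of length g_n
   (at level 0 this is the rotation by alpha itself, with tiles 0 and 1).  Inducing the
   rotation on an interval of length 1 - (a - 1) g_n, a = floor (1 / g_n), groups the tiles
   into runs s_n^(a-1) s_(n-1) = s_(n+1) and single tiles s_n, coded again by a rotation,
   now with a marked interval of length g_(n+1): this gives existence.  Splitting every tile s_(n+1) = s_n^m s_(n-1) of an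
   (n+1)-partition gives an n-partition, which is unique, and because s_n <> s_(n-1) the
   cut points of the (n+1)-partition are recovered from it as the n-cut points from which
   none of the next m tiles is an s_(n-1). *)

(** * Floor, fractional part and continued fractions *)

Lemma floorR_spec (x : R) : IZR (floorR x) <= x < IZR (floorR x) + 1.
Proof. unfold floorR. destruct (base_Int_part x). lra. Qed.

Lemma floorR_unique (x : R) (k : Z) : IZR k <= x < IZR k + 1 -> floorR x = k.
Proof.
  intros [H1 H2]. destruct (floorR_spec x) as [H3 H4].
  assert (floorR x < k + 1)%Z by (apply lt_IZR; rewrite plus_IZR; simpl; lra).
  assert (k < floorR x + 1)%Z by (apply lt_IZR; rewrite plus_IZR; simpl; lra).
  lia.
Qed.

Lemma floorR_nonneg (x : R) : 0 <= x -> (0 <= floorR x)%Z.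
Proof.
  intros H. destruct (floorR_spec x).
  assert (-1 < floorR x)%Z by (apply lt_IZR; simpl; lra). lia.
Qed.

Lemma floorR_add_IZR (x : R) (k : Z) : floorR (x + IZR k) = (floorR x + k)%Z.
Proof. apply floorR_unique. destruct (floorR_spec x). rewrite plus_IZR. lra. Qed.

Lemma floorR_add_wrap (x d : R) : 0 < d < 1 -> 1 - d <= fracR x ->
  floorR (x + d) = (floorR x + 1)%Z.
Proof.
  intros Hd H. apply floorR_unique. destruct (floorR_spec x). unfold fracR in H.
  rewrite plus_IZR. simpl. lra.
Qed.

Lemma floorR_add_nowrap (x d : R) : 0 < d < 1 -> fracR x < 1 - d ->
  floorR (x + d) = floorR x.
Proof.
  intros Hd H. apply floorR_unique. destruct (floorR_spec x). unfold fracR in H. lra.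
Qed.

Lemma fracR_bounds (x : R) : 0 <= fracR x < 1.
Proof. unfold fracR. destruct (floorR_spec x). lra. Qed.

Lemma fracR_eq (x y : R) (k : Z) : 0 <= y < 1 -> x = IZR k + y -> fracR x = y.
Proof. intros H ->. unfold fracR. rewrite (floorR_unique _ k); [ring | lra]. Qed.

Lemma fracR_add_IZR (x y : R) (k : Z) : x = y + IZR k -> fracR x = fracR y.
Proof. intros ->. unfold fracR. rewrite floorR_add_IZR, plus_IZR. ring. Qed.

Lemma lt_div_iff (L w y : R) : 0 < L -> (w < y / L <-> L * w < y).
Proof.
  intros HL. assert (E : L * (y / L) = y) by (field; lra).
  split; intro H.
  - assert (L * w < L * (y / L)) by (apply Rmult_lt_compat_l; lra). lra.
  - destruct (Rlt_le_dec w (y / L)) as [|H']; auto.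
    assert (L * (y / L) <= L * w) by (apply Rmult_le_compat_l; lra). lra.
Qed.

Lemma div_lt_iff (L w y : R) : 0 < L -> (y / L < w <-> y < L * w).
Proof.
  intros HL. assert (E : L * (y / L) = y) by (field; lra).
  split; intro H.
  - assert (L * (y / L) < L * w) by (apply Rmult_lt_compat_l; lra). lra.
  - destruct (Rlt_le_dec (y / L) w) as [|H']; auto.
    assert (L * w <= L * (y / L)) by (apply Rmult_le_compat_l; lra). lra.
Qed.

Lemma div_in_unit (x y : R) : 0 <= x < y -> 0 <= x / y < 1.
Proof.
  intros H. split.
  - unfold Rdiv. apply Rmult_le_pos; [lra | left; apply Rinv_0_lt_compat; lra].
  - apply div_lt_iff; lra.
Qed.

Lemma irrational_not_IZR (x : R) (z : Z) : irrational x -> x <> IZR z.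
Proof. intros H E. apply H. exists z, 1%Z. split; [lia|]. rewrite E. field. Qed.

Lemma irrational_inv (x : R) : irrational x -> irrational (1 / x).
Proof.
  intros H [p [q [Hq E]]]. apply H.
  assert (Hx : x <> 0) by apply (irrational_not_IZR x 0 H).
  assert (Hp : p <> 0%Z).
  { intros ->. assert (1 / x <> 0) by (unfold Rdiv; rewrite Rmult_1_l; apply Rinv_neq_0_compat; auto).
    rewrite E in H0. apply H0. unfold Rdiv. ring. }
  exists q, p. split; auto. apply not_0_IZR in Hp, Hq.
  replace x with (1 / (1 / x)) by (field; auto). rewrite E. field. auto.
Qed.

Lemma irrational_add_IZR (x : R) (k : Z) : irrational x -> irrational (x + IZR k).
Proof.
  intros H [p [q [Hq E]]]. apply H. exists (p - k * q)%Z, q. split; auto.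
  apply not_0_IZR in Hq. rewrite minus_IZR, mult_IZR.
  replace x with (IZR p / IZR q - IZR k) by lra. field. auto.
Qed.

Lemma cf_rem_spec (alpha : R) : 0 < alpha < 1 -> irrational alpha ->
  forall n, 0 < cf_rem alpha n < 1 /\ irrational (cf_rem alpha n).
Proof.
  intros Ha Hi. induction n as [|n [IH1 IH2]]; simpl; auto.
  assert (Hir : irrational (fracR (1 / cf_rem alpha n))).
  { unfold fracR. unfold Rminus. rewrite <- opp_IZR. apply irrational_add_IZR, irrational_inv, IH2. }
  split; auto. destruct (fracR_bounds (1 / cf_rem alpha n)) as [[H|H] H'].
  - lra.
  - exfalso. apply (irrational_not_IZR _ 0 Hir). auto.
Qed.
Lemma floor_inv_spec (g : R) : 0 < g < 1 -> (forall z, 1 / g <> IZR z) ->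
  (1 <= floorR (1 / g))%Z /\ IZR (floorR (1 / g)) * g < 1 < (IZR (floorR (1 / g)) + 1) * g.
Proof.
  intros Hg Hn. destruct (floorR_spec (1 / g)) as [[H1|H1] H2];
    [|exfalso; apply (Hn (floorR (1 / g))); auto].
  assert (1 < 1 / g) by (apply (Rmult_lt_reg_l g); [lra | field_simplify; lra]).
  split; [|split].
  - assert (0 < floorR (1 / g))%Z by (apply lt_IZR; simpl; lra). lia.
  - apply (Rmult_lt_compat_r g) in H1; [|lra]. field_simplify in H1; lra.
  - apply (Rmult_lt_compat_r g) in H2; [|lra]. field_simplify in H2; lra.
Qed.

Definition induced_len (g : R) : R :=
  (1 - IZR (floorR (1 / g)) * g) / (1 - (IZR (floorR (1 / g)) - 1) * g).

(* For n >= 1 the marked length r_n / (1 + r_n) has 1 / g = 1 / r_n + 1, so that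
   floor (1 / g) - 1 = a_(n+1) is the exponent in s_(n+1) = s_n^a_(n+1) s_(n-1);
   at n = 0, floor (1 / alpha) - 1 = a_1 - 1 is the exponent in s_1. *)
Definition mark_len (alpha : R) (n : nat) : R :=
  match n with O => alpha | S _ => cf_rem alpha n / (1 + cf_rem alpha n) end.

Definition s_exponent (alpha : R) (n : nat) : nat :=
  match n with O => (cf_digit alpha 1 - 1)%nat | S m => cf_digit alpha (S (S m)) end.

Section MarkLen.
Variable alpha : R.
Hypothesis Ha : 0 < alpha < 1.
Hypothesis Hirr : irrational alpha.

Lemma inv_mark_len_succ (m : nat) :
  1 / mark_len alpha (S m) = 1 / cf_rem alpha (S m) + IZR 1.
Proof.
  destruct (cf_rem_spec alpha Ha Hirr (S m)).
  change (mark_len alpha (S m)) with (cf_rem alpha (S m) / (1 + cf_rem alpha (S m))).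
  field. lra.
Qed.

Lemma mark_len_spec (n : nat) :
  0 < mark_len alpha n < 1 /\ forall z, 1 / mark_len alpha n <> IZR z.
Proof.
  destruct n as [|m]; [split; [auto | intro z; apply irrational_not_IZR, irrational_inv, Hirr]|].
  destruct (cf_rem_spec alpha Ha Hirr (S m)) as [Hr Hi]. split.
  - change (mark_len alpha (S m)) with (cf_rem alpha (S m) / (1 + cf_rem alpha (S m))).
    split; [apply Rdiv_lt_0_compat; lra|].
    apply div_lt_iff; lra.
  - intro z. rewrite inv_mark_len_succ.
    apply irrational_not_IZR, irrational_add_IZR, irrational_inv, Hi.
Qed.

Lemma induced_len_mark_len (n : nat) : induced_len (mark_len alpha n) = mark_len alpha (S n).
Proof.
  unfold induced_len. destruct n as [|m].
  - destruct (cf_rem_spec alpha Ha Hirr 1) as [[H1 H2] _]. simpl in H1, H2 |- *.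
    unfold fracR in *. set (F := IZR (floorR (1 / alpha))) in *.
    assert (0 < (1 / alpha - F) * alpha) by (apply Rmult_lt_0_compat; lra).
    assert (1 / alpha * alpha = 1) by (field; lra).
    field. split; nra.
  - rewrite inv_mark_len_succ, floorR_add_IZR, plus_IZR. simpl (IZR 1).
    destruct (cf_rem_spec alpha Ha Hirr (S m)) as [[H1 H2] _].
    destruct (cf_rem_spec alpha Ha Hirr (S (S m))) as [[H3 H4] _].
    change (cf_rem alpha (S (S m))) with (fracR (1 / cf_rem alpha (S m))) in H3, H4 |- *.
    change (mark_len alpha (S m)) with (cf_rem alpha (S m) / (1 + cf_rem alpha (S m))).
    change (mark_len alpha (S (S m))) with
      (fracR (1 / cf_rem alpha (S m)) / (1 + fracR (1 / cf_rem alpha (S m)))).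
    unfold fracR in *.
    set (x := cf_rem alpha (S m)) in *. set (F := IZR (floorR (1 / x))) in *.
    assert (0 < (1 / x - F) * x) by (apply Rmult_lt_0_compat; lra).
    assert (1 / x * x = 1) by (field; lra).
    field. repeat split; nra.
Qed.

Lemma s_exponent_floor (n : nat) :
  s_exponent alpha n = (Z.to_nat (floorR (1 / mark_len alpha n)) - 1)%nat.
Proof.
  destruct n as [|m]; [reflexivity|].
  rewrite inv_mark_len_succ, floorR_add_IZR. unfold s_exponent, cf_digit. simpl pred.
  destruct (cf_rem_spec alpha Ha Hirr (S m)) as [Hr _].
  assert (0 <= floorR (1 / cf_rem alpha (S m)))%Z.
  { apply floorR_nonneg. unfold Rdiv. rewrite Rmult_1_l. left. apply Rinv_0_lt_compat. lra. }
  lia.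
Qed.

End MarkLen.

(** * Rotations and first returns *)

Definition orbit (d r : R) (k : Z) : R := fracR (IZR k * d + r).

(* The orientation b of the marked interval alternates from one renormalization level to
   the next. *)
Definition marked (d r : R) (b : bool) (k : Z) : Prop :=
  if b then 1 - d <= orbit d r k else orbit d r k < 1 - d.

Definition marked_len (b : bool) (d : R) : R := if b then d else 1 - d.

(* e j is the j-th visit of the orbit (d, r) to an inducing interval, and (d', r') the
   rescaled first-return orbit: it returns after one step, past an unmarked point, exactly
   when the new orbit is marked (for the opposite orientation), and otherwise after a steps,
   past a - 1 unmarked points and one marked point. *)
Definition first_return (d r : R) (b : bool) (a : Z) (d' r' : R) (e : Z -> Z) : Prop :=
  (e 0 <= 0 < e 1)%Z /\ forall j,
  (marked d' r' (negb b) j -> e (j + 1)%Z = (e j + 1)%Z /\ ~ marked d r b (e j)) /\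
  (~ marked d' r' (negb b) j -> e (j + 1)%Z = (e j + a)%Z /\
     (forall i, (0 <= i < a - 1)%Z -> ~ marked d r b (e j + i)) /\ marked d r b (e j + (a - 1))).

Lemma orbit_add (d r : R) (k i : Z) : orbit d r (k + i) = fracR (orbit d r k + IZR i * d).
Proof.
  unfold orbit. apply (fracR_add_IZR _ _ (floorR (IZR k * d + r))).
  unfold fracR. rewrite plus_IZR. ring.
Qed.

Lemma orbit_add_alt (d r : R) (k i : Z) : orbit d r (k + i) = fracR (orbit d r k - IZR i * (1 - d)).
Proof. rewrite orbit_add. apply (fracR_add_IZR _ _ i). ring. Qed.

Lemma marked_dec (d r : R) (b : bool) (k : Z) : {marked d r b k} + {~ marked d r b k}.
Proof.
  unfold marked. destruct b; [apply Rle_dec | apply Rlt_dec].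
Qed.

Section FirstReturnTop.
Variables g r : R.
Hypothesis Hg : 0 < g < 1.
Hypothesis Hn : forall z, 1 / g <> IZR z.
Let a := floorR (1 / g).
Let L := 1 - (IZR a - 1) * g.

Lemma top_len_facts :
  (1 <= a)%Z /\ 1 <= IZR a /\ IZR a * g < 1 < (IZR a + 1) * g /\ g < L <= 1.
Proof.
  destruct (floor_inv_spec g Hg Hn) as [Ha1 Hag]. fold a in Ha1, Hag.
  assert (1 <= IZR a) by (apply IZR_le; lia). unfold L. split; [lia | split; [|split]]; nra.
Qed.

(* the last visit to [0, L) at or before index 0 *)
Lemma top_entry : exists e0, (e0 <= 0)%Z /\ 0 <= orbit g r e0 < L /\
  (orbit g r e0 < L - g -> (0 < e0 + 1)%Z) /\ (L - g <= orbit g r e0 -> (0 < e0 + a)%Z).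
Proof.
  destruct top_len_facts as [Ha1 [HaR [Hag HL]]].
  destruct (Rlt_dec (orbit g r 0) L) as [Hl|Hl].
  - exists 0%Z. pose proof (fracR_bounds (IZR 0 * g + r)).
    split; [lia|]. split; [unfold orbit in *; lra|]. split; intros; lia.
  - apply Rnot_lt_le in Hl. set (u := orbit g r 0) in *.
    assert (Hu : 0 <= u < 1) by apply fracR_bounds.
    set (q := (u - (1 - IZR a * g)) / g).
    assert (Hq : q * g = u - (1 - IZR a * g)) by (unfold q; field; lra).
    set (i := floorR q). destruct (floorR_spec q) as [Hi1 Hi2]. fold i in Hi1, Hi2.
    assert (IZR i * g <= q * g) by (apply Rmult_le_compat_r; lra).
    assert (q * g < (IZR i + 1) * g) by (apply Rmult_lt_compat_r; lra).
    assert (1 <= q) by (apply Rmult_le_reg_r with g; [lra | unfold L in Hl; nra]).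
    assert (q < IZR a) by (apply Rmult_lt_reg_r with g; [lra | nra]).
    assert (Hi0 : (0 < i)%Z) by (apply lt_IZR; simpl; lra).
    assert (Hia : (i < a)%Z) by (apply lt_IZR; lra).
    assert (Hv : orbit g r (- i) = u - IZR i * g).
    { replace (- i)%Z with (0 + - i)%Z by lia. rewrite orbit_add. fold u.
      apply (fracR_eq _ _ 0%Z); [unfold L in HL; lra | rewrite opp_IZR; simpl; ring]. }
    exists (- i)%Z. rewrite Hv. unfold L in *.
    split; [lia|]. split; [split; lra|]. split; intros; [exfalso; nra | lia].
Qed.

Section FromEntry.
Variable e0 : Z.
Hypothesis He0 : 0 <= orbit g r e0 < L.
Let d' := g / L.
Let r' := orbit g r e0 / L.
Let e (j : Z) : Z := (e0 + j + (a - 1) * floorR (IZR j * d' + r'))%Z.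

Lemma top_return_orbit (j : Z) : orbit g r (e j) = L * orbit d' r' j.
Proof.
  destruct top_len_facts as [_ [_ [_ HL]]].
  pose proof (fracR_bounds (IZR j * d' + r')) as Hw.
  unfold orbit at 1. apply (fracR_eq _ _ (floorR (IZR e0 * g + r) + floorR (IZR j * d' + r'))%Z).
  - unfold orbit. split; nra.
  - unfold e, r', d', orbit, fracR, L in *. rewrite !plus_IZR, mult_IZR, minus_IZR. field. lra.
Qed.

Lemma top_return_step (j : Z) :
  (marked d' r' false j -> e (j + 1)%Z = (e j + 1)%Z /\ ~ marked g r true (e j)) /\
  (~ marked d' r' false j -> e (j + 1)%Z = (e j + a)%Z /\
     (forall i, (0 <= i < a - 1)%Z -> ~ marked g r true (e j + i)) /\
     marked g r true (e j + (a - 1))).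
Proof.
  destruct top_len_facts as [Ha1 [HaR [Hag HL]]].
  assert (Hd' : 0 < d' < 1) by (split; [apply Rdiv_lt_0_compat | apply div_lt_iff]; lra).
  assert (E1 : 1 - d' = (L - g) / L) by (unfold d'; field; lra).
  set (x := IZR j * d' + r').
  assert (Hx : IZR (j + 1) * d' + r' = x + d') by (unfold x; rewrite plus_IZR; ring).
  pose proof (fracR_bounds x) as Hw.
  assert (Ew : orbit d' r' j = fracR x) by reflexivity.
  unfold marked. rewrite Ew, E1. split.
  - intros HB. apply lt_div_iff in HB; [|lra]. split.
    + unfold e. fold x. rewrite Hx, floorR_add_nowrap; [lia | auto |].
      rewrite E1. apply lt_div_iff; lra.
    + rewrite top_return_orbit, Ew. unfold L in *. nra.
  - intros HA. assert (HA' : L - g <= L * fracR x).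
    { destruct (Rlt_le_dec (L * fracR x) (L - g)); auto. exfalso. apply HA, lt_div_iff; lra. }
    assert (Hstep : forall i, (0 <= i <= a - 1)%Z ->
      orbit g r (e j + i) = L * fracR x + IZR i * g).
    { intros i Hi. assert (0 <= IZR i <= IZR a - 1).
      { rewrite <- minus_IZR. split; apply IZR_le; lia. }
      rewrite orbit_add, top_return_orbit, Ew.
      apply (fracR_eq _ _ 0%Z); [unfold L in *; split; nra | simpl; ring]. }
    split; [|split].
    + unfold e. fold x. rewrite Hx, floorR_add_wrap; [lia | auto |]. rewrite E1.
      destruct (Rlt_le_dec (fracR x) ((L - g) / L)) as [h|h]; auto. contradiction.
    + intros i Hi. rewrite Hstep by lia.
      assert (IZR i <= IZR a - 2) by (rewrite <- (minus_IZR a 2); apply IZR_le; lia).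
      unfold L in *. nra.
    + rewrite Hstep by lia. rewrite minus_IZR. simpl (IZR 1). unfold L in *. nra.
Qed.

End FromEntry.

Lemma first_return_top : exists d' r' e, 0 < d' < 1 /\
  marked_len false d' = induced_len g /\ first_return g r true a d' r' e.
Proof.
  destruct top_len_facts as [Ha1 [HaR [Hag HL]]].
  destruct top_entry as [e0 [He0n [Hu0 [Hnext1 Hnexta]]]].
  set (u0 := orbit g r e0) in *.
  assert (Hr' : 0 <= u0 / L < 1) by (apply div_in_unit; lra).
  exists (g / L), (u0 / L), (fun j => (e0 + j + (a - 1) * floorR (IZR j * (g / L) + u0 / L))%Z).
  split; [split; [apply Rdiv_lt_0_compat | apply div_lt_iff]; lra|].
  split; [unfold marked_len, induced_len; fold a; unfold L in *; field; lra|].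
  split; [| exact (top_return_step e0 Hu0)].
  assert (E0 : floorR (IZR 0 * (g / L) + u0 / L) = 0%Z) by (apply floorR_unique; simpl; lra).
  cbv beta. rewrite E0. simpl (IZR 1). rewrite Rmult_1_l.
  destruct (Rlt_le_dec u0 (L - g)) as [Hl|Hl].
  - rewrite (floorR_unique _ 0%Z); [specialize (Hnext1 Hl); lia|].
    replace (g / L + u0 / L) with ((u0 + g) / L) by (field; lra).
    pose proof (div_in_unit (u0 + g) L). simpl. lra.
  - rewrite (floorR_unique _ 1%Z); [specialize (Hnexta Hl); lia|].
    replace (g / L + u0 / L) with (1 + (u0 + g - L) / L) by (field; lra).
    pose proof (div_in_unit (u0 + g - L) L). simpl. lra.
Qed.

End FirstReturnTop.

Section FirstReturnBottom.
Variables d r : R.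
Hypothesis Hd : 0 < d < 1.
Hypothesis Hn : forall z, 1 / (1 - d) <> IZR z.
Let g := 1 - d.
Let a := floorR (1 / g).
Let L := 1 - (IZR a - 1) * g.

Lemma bottom_len_facts :
  (1 <= a)%Z /\ 1 <= IZR a /\ IZR a * g < 1 < (IZR a + 1) * g /\ 0 < g < 1 /\ g < L <= 1.
Proof.
  assert (Hg : 0 < g < 1) by (unfold g; lra).
  destruct (floor_inv_spec g Hg Hn) as [Ha1 Hag]. fold a in Ha1, Hag.
  assert (1 <= IZR a) by (apply IZR_le; lia). unfold L. split; [lia | split; [|split; [|split]]]; nra.
Qed.

(* the last visit to [1 - L, 1) at or before index 0 *)
Lemma bottom_entry : exists e0, (e0 <= 0)%Z /\ 1 - L <= orbit d r e0 < 1 /\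
  (orbit d r e0 < 1 - L + g -> (0 < e0 + a)%Z) /\ (1 - L + g <= orbit d r e0 -> (0 < e0 + 1)%Z).
Proof.
  destruct bottom_len_facts as [Ha1 [HaR [Hag [Hg HL]]]].
  destruct (Rlt_dec (orbit d r 0) (1 - L)) as [Hl|Hl].
  - set (u := orbit d r 0) in *. assert (Hu : 0 <= u < 1) by apply fracR_bounds.
    set (q := u / g). assert (Hq : q * g = u) by (unfold q; field; lra).
    set (m := floorR q). destruct (floorR_spec q) as [Hm1 Hm2]. fold m in Hm1, Hm2.
    assert (IZR m * g <= q * g) by (apply Rmult_le_compat_r; lra).
    assert (q * g < (IZR m + 1) * g) by (apply Rmult_lt_compat_r; lra).
    assert (0 <= q) by (unfold q; apply Rmult_le_pos; [lra | left; apply Rinv_0_lt_compat; lra]).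
    assert (q < IZR a - 1) by (apply Rmult_lt_reg_r with g; [lra | unfold L in Hl; lra]).
    assert (Hm0 : (0 <= m)%Z) by (apply floorR_nonneg; lra).
    assert (Hma : (m < a - 1)%Z) by (apply lt_IZR; rewrite minus_IZR; simpl; lra).
    set (i := (a - 1 - m)%Z).
    assert (HiR : IZR i = IZR a - 1 - IZR m) by (unfold i; rewrite !minus_IZR; reflexivity).
    assert (Hv : orbit d r (- i) = u + IZR i * g).
    { replace (- i)%Z with (0 + - i)%Z by lia. rewrite orbit_add_alt. fold u g.
      apply (fracR_eq _ _ 0%Z); [rewrite HiR; split; nra | rewrite opp_IZR; simpl; ring]. }
    exists (- i)%Z. rewrite Hv. unfold L in *. rewrite HiR.
    split; [lia|]. split; [split; nra|]. split; intros; [lia | exfalso; nra].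
  - apply Rnot_lt_le in Hl. exists 0%Z. pose proof (fracR_bounds (IZR 0 * d + r)).
    split; [lia|]. split; [unfold orbit in *; lra|]. split; intros; lia.
Qed.

Section FromEntry.
Variable e0 : Z.
Hypothesis He0 : 1 - L <= orbit d r e0 < 1.
Let d' := 1 - g / L.
Let r' := (orbit d r e0 - (1 - L)) / L.
Let e (j : Z) : Z := (e0 + a * j - (a - 1) * floorR (IZR j * d' + r'))%Z.

Lemma bottom_return_orbit (j : Z) : orbit d r (e j) = (1 - L) + L * orbit d' r' j.
Proof.
  destruct bottom_len_facts as [_ [_ [_ [_ HL]]]].
  pose proof (fracR_bounds (IZR j * d' + r')) as Hw.
  unfold orbit at 1.
  apply (fracR_eq _ _ (e j + floorR (IZR e0 * d + r) - e0 + floorR (IZR j * d' + r') - j)%Z).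
  - unfold orbit. split; unfold L in *; nra.
  - unfold e, r', d', orbit, fracR, L, g in *. repeat rewrite ?plus_IZR, ?minus_IZR, ?mult_IZR.
    field. lra.
Qed.

Lemma bottom_return_step (j : Z) :
  (marked d' r' true j -> e (j + 1)%Z = (e j + 1)%Z /\ ~ marked d r false (e j)) /\
  (~ marked d' r' true j -> e (j + 1)%Z = (e j + a)%Z /\
     (forall i, (0 <= i < a - 1)%Z -> ~ marked d r false (e j + i)) /\
     marked d r false (e j + (a - 1))).
Proof.
  destruct bottom_len_facts as [Ha1 [HaR [Hag [Hg HL]]]].
  assert (HgL : 0 < g / L < 1) by (split; [apply Rdiv_lt_0_compat | apply div_lt_iff]; lra).
  assert (Hd' : 0 < d' < 1) by (unfold d'; lra).
  assert (E1 : 1 - d' = g / L) by (unfold d'; ring).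
  assert (Eg : 1 - d = g) by reflexivity.
  set (x := IZR j * d' + r').
  assert (Hx : IZR (j + 1) * d' + r' = x + d') by (unfold x; rewrite plus_IZR; ring).
  pose proof (fracR_bounds x) as Hw.
  assert (Ew : orbit d' r' j = fracR x) by reflexivity.
  unfold marked. rewrite Ew, E1, Eg. split.
  - intros HB. assert (g <= L * fracR x).
    { destruct (Rlt_le_dec (L * fracR x) g) as [h|]; auto.
      apply (lt_div_iff L (fracR x) g) in h; lra. }
    split.
    + unfold e. fold x. rewrite Hx, floorR_add_wrap; [lia | auto | rewrite E1; auto].
    + rewrite bottom_return_orbit, Ew. unfold L in *. nra.
  - intros HA. apply Rnot_le_lt, lt_div_iff in HA; [|lra].
    assert (Hstep : forall i, (0 <= i <= a - 1)%Z ->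
      orbit d r (e j + i) = 1 - L + L * fracR x - IZR i * g).
    { intros i Hi. assert (0 <= IZR i <= IZR a - 1).
      { rewrite <- minus_IZR. split; apply IZR_le; lia. }
      rewrite orbit_add_alt, bottom_return_orbit, Ew. fold g.
      apply (fracR_eq _ _ 0%Z); [unfold L in *; split; nra | simpl; ring]. }
    split; [|split].
    + unfold e. fold x. rewrite Hx, floorR_add_nowrap; [lia | auto |].
      rewrite E1. apply lt_div_iff; lra.
    + intros i Hi. rewrite Hstep by lia.
      assert (IZR i <= IZR a - 2) by (rewrite <- (minus_IZR a 2); apply IZR_le; lia).
      unfold L in *. nra.
    + rewrite Hstep by lia. rewrite minus_IZR. simpl (IZR 1). unfold L in *. nra.
Qed.

End FromEntry.

Lemma first_return_bottom : exists d' r' e, 0 < d' < 1 /\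
  marked_len true d' = induced_len (1 - d) /\ first_return d r false a d' r' e.
Proof.
  destruct bottom_len_facts as [Ha1 [HaR [Hag [Hg HL]]]].
  destruct bottom_entry as [e0 [He0n [Hu0 [Hnexta Hnext1]]]].
  set (u0 := orbit d r e0) in *.
  assert (Hr' : 0 <= (u0 - (1 - L)) / L < 1) by (apply div_in_unit; lra).
  exists (1 - g / L), ((u0 - (1 - L)) / L),
    (fun j => (e0 + a * j - (a - 1) * floorR (IZR j * (1 - g / L) + (u0 - (1 - L)) / L))%Z).
  assert (HgL : 0 < g / L < 1) by (split; [apply Rdiv_lt_0_compat | apply div_lt_iff]; lra).
  split; [lra|].
  split; [unfold marked_len, induced_len; fold g a; unfold L in *; field; lra|].
  split; [| exact (bottom_return_step e0 Hu0)].
  assert (E0 : floorR (IZR 0 * (1 - g / L) + (u0 - (1 - L)) / L) = 0%Z)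
    by (apply floorR_unique; simpl; lra).
  cbv beta. rewrite E0. simpl (IZR 1). rewrite Rmult_1_l.
  destruct (Rlt_le_dec u0 (1 - L + g)) as [Hl|Hl].
  - rewrite (floorR_unique _ 0%Z); [specialize (Hnexta Hl); lia|].
    replace (1 - g / L + (u0 - (1 - L)) / L) with ((u0 - (1 - L) + L - g) / L) by (field; lra).
    pose proof (div_in_unit (u0 - (1 - L) + L - g) L). simpl. lra.
  - rewrite (floorR_unique _ 1%Z); [specialize (Hnext1 Hl); lia|].
    replace (1 - g / L + (u0 - (1 - L)) / L) with (1 + (u0 - (1 - L) - g) / L) by (field; lra).
    pose proof (div_in_unit (u0 - (1 - L) - g) L). simpl. lra.
Qed.

End FirstReturnBottom.

Lemma first_return_exists (d r : R) (b : bool) : 0 < d < 1 ->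
  (forall z, 1 / marked_len b d <> IZR z) ->
  exists d' r' e, 0 < d' < 1 /\ marked_len (negb b) d' = induced_len (marked_len b d) /\
    first_return d r b (floorR (1 / marked_len b d)) d' r' e.
Proof.
  destruct b; simpl; intros; [apply first_return_top | apply first_return_bottom]; auto.
Qed.

(** * The words s_n and their occurrences *)

Lemma s_succ (alpha : R) (n : nat) : s_prev alpha (S n) = s alpha n /\
  s alpha (S n) = wpow (s alpha n) (s_exponent alpha n) ++ s_prev alpha n.
Proof.
  destruct n as [|m]; [split; reflexivity|].
  unfold s, s_prev. change (s_pair alpha (S (S m))) with
    (let (p, q) := s_pair alpha (S m) in (q, wpow q (cf_digit alpha (S (S m))) ++ p)).
  destruct (s_pair alpha (S m)). split; reflexivity.
Qed.

Lemma last_app_nonnil (l p : word) (x : nat) : p <> nil -> last (l ++ p) x = last p x.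
Proof.
  intros Hp. induction l as [|y l IH]; simpl; auto.
  destruct (l ++ p) eqn:E; [apply app_eq_nil in E; destruct E; congruence | exact IH].
Qed.

Lemma s_spec (alpha : R) (n : nat) : s alpha n <> nil /\ s_prev alpha n <> nil /\
  last (s alpha n) 0%nat <> last (s_prev alpha n) 0%nat.
Proof.
  induction n as [|n [H1 [H2 H3]]]; [unfold s, s_prev; simpl; repeat split; discriminate|].
  destruct (s_succ alpha n) as [-> ->]. repeat split; auto.
  - intro E. apply app_eq_nil in E. destruct E; auto.
  - rewrite last_app_nonnil; auto.
Qed.

Lemma s_neq_s_prev (alpha : R) (n : nat) : s alpha n <> s_prev alpha n.
Proof. destruct (s_spec alpha n) as [_ [_ H]]. intros E. apply H. rewrite E. reflexivity. Qed.

Definition zlen (w : word) : Z := Z.of_nat (length w).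

Definition reads (f : Z -> nat) (x : Z) (w : word) : Prop :=
  forall i : nat, (i < length w)%nat -> f (x + Z.of_nat i)%Z = nth i w 0%nat.

Lemma zlen_pos (w : word) : w <> nil -> (1 <= zlen w)%Z.
Proof. destruct w; [congruence | unfold zlen; simpl; lia]. Qed.

Lemma zlen_app (w1 w2 : word) : zlen (w1 ++ w2) = (zlen w1 + zlen w2)%Z.
Proof. unfold zlen. rewrite length_app. lia. Qed.

Lemma zlen_wpow (w : word) (m : nat) : zlen (wpow w m) = (Z.of_nat m * zlen w)%Z.
Proof. induction m; simpl wpow; [reflexivity | rewrite zlen_app, IHm; lia]. Qed.

Lemma reads_app (f : Z -> nat) (x : Z) (w1 w2 : word) :
  reads f x (w1 ++ w2) <-> reads f x w1 /\ reads f (x + zlen w1) w2.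
Proof.
  unfold reads, zlen. split.
  - intros H. split.
    + intros i Hi. rewrite <- (app_nth1 w1 w2 0%nat Hi). apply H. rewrite length_app. lia.
    + intros i Hi. replace (x + Z.of_nat (length w1) + Z.of_nat i)%Z
        with (x + Z.of_nat (length w1 + i))%Z by lia.
      rewrite H by (rewrite length_app; lia). rewrite app_nth2 by lia. f_equal. lia.
  - intros [H1 H2] i Hi. rewrite length_app in Hi.
    destruct (Nat.lt_ge_cases i (length w1)).
    + rewrite app_nth1; auto.
    + rewrite app_nth2, <- H2 by lia. f_equal. lia.
Qed.

Lemma reads_wpow (f : Z -> nat) (w : word) (m : nat) (x : Z) : reads f x (wpow w m) ->
  forall i : nat, (i < m)%nat -> reads f (x + Z.of_nat i * zlen w) w.
Proof.
  revert x. induction m as [|m IH]; intros x H i Hi; [lia|].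
  apply reads_app in H. destruct H as [H1 H2]. destruct i as [|i].
  - rewrite Z.add_0_r. exact H1.
  - replace (x + Z.of_nat (S i) * zlen w)%Z with (x + zlen w + Z.of_nat i * zlen w)%Z by lia.
    apply IH; auto. lia.
Qed.

Lemma reads_ext (f : Z -> nat) (x : Z) (w w' : word) :
  reads f x w -> reads f x w' -> length w = length w' -> w = w'.
Proof.
  intros H1 H2 HL. apply (nth_ext _ _ 0%nat 0%nat HL).
  intros i Hi. rewrite <- H1, <- H2 by lia. reflexivity.
Qed.

Definition tile (f : Z -> nat) (d : Z -> Z) (j : Z) (w : word) : Prop :=
  zlen w = (d (j + 1) - d j)%Z /\ reads f (d j) w.

Lemma tiles_wpow (f : Z -> nat) (d : Z -> Z) (w : word) (m : nat) (k : Z) :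
  (forall i : nat, (i < m)%nat -> tile f d (k + Z.of_nat i) w) ->
  zlen (wpow w m) = (d (k + Z.of_nat m) - d k)%Z /\ reads f (d k) (wpow w m).
Proof.
  revert k. induction m as [|m IH]; intros k H.
  - rewrite Z.add_0_r. split; [unfold zlen; simpl; lia | intros i Hi; simpl in Hi; lia].
  - destruct (H 0%nat ltac:(lia)) as [L0 B0]. rewrite Z.add_0_r in L0, B0.
    destruct (IH (k + 1)%Z) as [L1 B1].
    { intros i Hi. replace (k + 1 + Z.of_nat i)%Z with (k + Z.of_nat (S i))%Z by lia. apply H. lia. }
    replace (k + 1 + Z.of_nat m)%Z with (k + Z.of_nat (S m))%Z in L1 by lia.
    simpl wpow. rewrite zlen_app. split; [lia|].
    apply reads_app. split; auto. replace (d k + zlen w)%Z with (d (k + 1))%Z by lia. exact B1.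
Qed.

Lemma le_of_succ_lt (d : Z -> Z) : (forall j, d j < d (j + 1))%Z ->
  forall j k, (j <= k)%Z -> (d j <= d k)%Z.
Proof.
  intros H j k Hjk. replace k with (j + Z.of_nat (Z.to_nat (k - j)))%Z by lia.
  induction (Z.to_nat (k - j)) as [|m IH]; [rewrite Z.add_0_r; lia|].
  specialize (H (j + Z.of_nat m)%Z).
  replace (j + Z.of_nat (S m))%Z with (j + Z.of_nat m + 1)%Z by lia. lia.
Qed.

Lemma lt_of_succ_lt (d : Z -> Z) : (forall j, d j < d (j + 1))%Z ->
  forall j k, (j < k)%Z -> (d j < d k)%Z.
Proof.
  intros H j k Hjk. pose proof (le_of_succ_lt d H (j + 1) k ltac:(lia)). specialize (H j). lia.
Qed.

(** * Existence *)

Definition coded_at (alpha : R) (f : Z -> nat) (n : nat) : Prop :=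
  exists (d : Z -> Z) (dl r : R) (b : bool),
    0 < dl < 1 /\ marked_len b dl = mark_len alpha n /\ (d 0 <= 0 < d 1)%Z /\
    forall j, (marked dl r b j -> tile f d j (s_prev alpha n)) /\
              (~ marked dl r b j -> tile f d j (s alpha n)).

Section Existence.
Variable alpha : R.
Hypothesis Ha : 0 < alpha < 1.
Hypothesis Hirr : irrational alpha.

Lemma coded_tiles_increasing (f : Z -> nat) (n : nat) (d : Z -> Z) (dl r : R) (b : bool) :
  (forall j, (marked dl r b j -> tile f d j (s_prev alpha n)) /\
             (~ marked dl r b j -> tile f d j (s alpha n))) ->
  forall j, (d j < d (j + 1))%Z.
Proof.
  intros H j. destruct (s_spec alpha n) as [N1 [N2 _]].
  destruct (marked_dec dl r b j) as [h|h]; apply H in h; destruct h as [h _].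
  - pose proof (zlen_pos _ N2). lia.
  - pose proof (zlen_pos _ N1). lia.
Qed.

Lemma coded_at_0 (theta : R) : coded_at alpha (v alpha theta) 0.
Proof.
  exists (fun j => j), alpha, theta, true. split; [auto | split; [auto | split; [lia|]]].
  intros j. unfold s, s_prev, marked, orbit; simpl.
  pose proof (fracR_bounds (IZR j * alpha + theta)) as Hf.
  split; intros H; (split; [unfold zlen; simpl; lia|]); intros i Hi; simpl in Hi;
    replace i with 0%nat by lia; simpl; rewrite Z.add_0_r; unfold v.
  - destruct (Rle_dec (1 - alpha) (fracR (IZR j * alpha + theta))); [|contradiction].
    destruct (Rlt_dec (fracR (IZR j * alpha + theta)) 1); [reflexivity | lra].
  - destruct (Rle_dec (1 - alpha) (fracR (IZR j * alpha + theta))); [contradiction | reflexivity].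
Qed.

Lemma coded_at_succ (f : Z -> nat) (n : nat) : coded_at alpha f n -> coded_at alpha f (S n).
Proof.
  intros [d [dl [r [b [Hdl [Hlen [H0 Htile]]]]]]].
  destruct (mark_len_spec alpha Ha Hirr n) as [Hg Hn]. rewrite <- Hlen in Hg, Hn.
  destruct (first_return_exists dl r b Hdl Hn) as [dl' [r' [e [Hdl' [Hlen' [He0 He]]]]]].
  set (a := floorR (1 / marked_len b dl)) in *.
  assert (Hexp : Z.of_nat (s_exponent alpha n) = (a - 1)%Z).
  { rewrite s_exponent_floor by auto. rewrite <- Hlen. fold a.
    destruct (floor_inv_spec _ Hg Hn) as [Ha1 _]. fold a in Ha1. lia. }
  pose proof (le_of_succ_lt d (coded_tiles_increasing _ _ _ _ _ _ Htile)) as Hmono.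
  destruct (s_succ alpha n) as [E1 E2].
  exists (fun j => d (e j)), dl', r', (negb b).
  split; [auto | split; [rewrite Hlen', Hlen; apply induced_len_mark_len; auto|]].
  split; [pose proof (Hmono (e 0%Z) 0%Z ltac:(lia)); pose proof (Hmono 1%Z (e 1%Z) ltac:(lia)); lia|].
  intros j. destruct (He j) as [Hshort Hlong]. rewrite E1, E2. split.
  - intros h. destruct (Hshort h) as [Ej Nj]. destruct (proj2 (Htile (e j)) Nj) as [L1 B1].
    split; [rewrite Ej; exact L1 | exact B1].
  - intros h. destruct (Hlong h) as [Ej [Ni Tl]].
    destruct (tiles_wpow f d (s alpha n) (s_exponent alpha n) (e j)) as [L1 B1].
    { intros i Hi. apply (proj2 (Htile _)), Ni. lia. }
    rewrite Hexp in L1. destruct (proj1 (Htile _) Tl) as [L2 B2].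
    split.
    + rewrite zlen_app, L1, L2, Ej. replace (e j + (a - 1) + 1)%Z with (e j + a)%Z by lia. lia.
    + apply reads_app. split; [exact B1|].
      replace (d (e j) + zlen (wpow (s alpha n) (s_exponent alpha n)))%Z with (d (e j + (a - 1))%Z)
        by lia. exact B2.
Qed.

Lemma partition_exists (theta : R) (n : nat) :
  exists d z, is_partition n alpha (v alpha theta) d z.
Proof.
  assert (Hcoded : coded_at alpha (v alpha theta) n).
  { induction n; [apply coded_at_0 | apply coded_at_succ; auto]. }
  destruct Hcoded as [d [dl [r [b [_ [_ [H0 Htile]]]]]]].
  exists d, (fun j => if marked_dec dl r b j then s_prev alpha n else s alpha n).
  split; [exact (coded_tiles_increasing _ _ _ _ _ _ Htile)|].
  split; [intros j; destruct (marked_dec dl r b j); auto|].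
  split; [exact H0|].
  intros j. destruct (marked_dec dl r b j) as [h|h]; apply Htile in h; exact h.
Qed.

End Existence.

(** * Uniqueness *)

Definition cut_block (f : Z -> nat) (S : Z -> Prop) (x : Z) (w : word) : Prop :=
  S x /\ reads f x w /\ S (x + zlen w)%Z /\ forall z, (x < z < x + zlen w)%Z -> ~ S z.

(* The cut points are unbounded below by the last clause and above by the second. *)
Definition cut_set (f : Z -> nat) (W1 W2 : word) (S : Z -> Prop) : Prop :=
  (exists x, S x) /\
  (forall x, S x -> exists w, (w = W1 \/ w = W2) /\ cut_block f S x w) /\
  (forall y, S y -> exists x, S x /\ (x < y)%Z /\ forall z, (x < z < y)%Z -> ~ S z).

Lemma cut_block_unique (f : Z -> nat) (S : Z -> Prop) (x : Z) (w w' : word) :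
  w <> nil -> w' <> nil -> cut_block f S x w -> cut_block f S x w' -> w = w'.
Proof.
  intros N N' [_ [B1 [E1 I1]]] [_ [B2 [E2 I2]]].
  pose proof (zlen_pos w N). pose proof (zlen_pos w' N').
  apply (reads_ext f x); auto.
  destruct (Z.lt_trichotomy (zlen w) (zlen w')) as [h|[h|h]].
  - exfalso. apply (I2 (x + zlen w)%Z); auto. lia.
  - unfold zlen in h. lia.
  - exfalso. apply (I1 (x + zlen w')%Z); auto. lia.
Qed.

Lemma cut_block_next (f : Z -> nat) (S : Z -> Prop) (x y : Z) (w : word) :
  cut_block f S x w -> S y -> (x < y)%Z -> (x + zlen w <= y)%Z.
Proof.
  intros [_ [_ [_ I]]] Hy Hlt. destruct (Z_lt_le_dec y (x + zlen w)); auto.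
  exfalso. apply (I y); auto; lia.
Qed.

Lemma cut_block_ext (f : Z -> nat) (S S' : Z -> Prop) (x : Z) (w : word) :
  (forall y, S y <-> S' y) -> cut_block f S x w -> cut_block f S' x w.
Proof.
  intros E [A [B [C D]]]. split; [apply E; auto | split; [auto | split; [apply E; auto|]]].
  intros z Hz HS. apply (D z Hz), E, HS.
Qed.

(* Recovers the coarse cut points (blocks W1^m W2 and W1) from the fine ones (blocks W1, W2). *)
Definition coarse_points (f : Z -> nat) (W1 W2 : word) (m : nat) (T : Z -> Prop) (x : Z) : Prop :=
  T x /\ ~ exists k : nat, (k < m)%nat /\ cut_block f T (x + Z.of_nat k * zlen W1)%Z W2.

Section Refinement.
Variable f : Z -> nat.
Variables W1 W2 : word.
Variable m : nat.
Hypothesis N1 : W1 <> nil.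
Hypothesis N2 : W2 <> nil.
Let long := wpow W1 m ++ W2.
Let l1 := zlen W1.
Let l2 := zlen W2.

Lemma zlen_long : zlen long = (Z.of_nat m * l1 + l2)%Z.
Proof. unfold long. rewrite zlen_app, zlen_wpow. reflexivity. Qed.

Lemma long_nonnil : long <> nil.
Proof. unfold long. intro E. apply app_eq_nil in E. destruct E; auto. Qed.

Variable C : Z -> Prop.
Hypothesis HS : cut_set f long W1 C.

Definition refinement (y : Z) : Prop :=
  exists x (i : nat), C x /\ y = (x + Z.of_nat i * l1)%Z /\
    (i = 0%nat \/ ((i <= m)%nat /\ cut_block f C x long)).

Lemma refinement_of_cut (y : Z) : C y -> refinement y.
Proof. intros H. exists y, 0%nat. split; [auto | split; [lia | auto]]. Qed.

Lemma refinement_inside (x z : Z) (w : word) : cut_block f C x w -> refinement z ->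
  (x < z < x + zlen w)%Z ->
  exists i : nat, (1 <= i <= m)%nat /\ cut_block f C x long /\ z = (x + Z.of_nat i * l1)%Z.
Proof.
  intros Hw [x' [i' [Sx' [Ez Hi']]]] Hz.
  pose proof (zlen_pos W1 N1) as P1. pose proof (zlen_pos W2 N2) as P2. fold l1 l2 in P1, P2.
  destruct (Z.lt_trichotomy x' x) as [h|[<-|h]].
  - exfalso. destruct Hi' as [->|[hm hv]]; [lia|].
    pose proof (cut_block_next _ _ _ _ _ hv (proj1 Hw) h). rewrite zlen_long in H. nia.
  - destruct Hi' as [->|[hm hv]]; [lia|]. exists i'. split; [destruct i'; lia | split; auto].
  - exfalso. pose proof (cut_block_next _ _ _ _ _ Hw Sx' h). nia.
Qed.

Lemma long_block_refines (x : Z) : cut_block f C x long ->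
  (forall i : nat, (i < m)%nat -> cut_block f refinement (x + Z.of_nat i * l1) W1) /\
  cut_block f refinement (x + Z.of_nat m * l1) W2.
Proof.
  intros Hv. pose proof Hv as [Sx [Bx [Se Ie]]].
  pose proof (zlen_pos W1 N1) as P1. pose proof (zlen_pos W2 N2) as P2. fold l1 l2 in P1, P2.
  pose proof zlen_long as LV.
  unfold long in Bx. apply reads_app in Bx. destruct Bx as [Bw Bl]. rewrite zlen_wpow in Bl.
  split.
  - intros i Hi. split; [|split; [|split]].
    + exists x, i. split; [auto | split; [auto | right; split; [lia | auto]]].
    + apply reads_wpow with m; auto.
    + exists x, (Datatypes.S i). split; [auto | split; [fold l1; lia | right; split; auto]].
    + intros z Hz Rz. destruct (refinement_inside x z long Hv Rz) as [i' [Hi' [_ Ez]]].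
      { fold l1 in Hz. split; [nia|]. rewrite LV. nia. }
      fold l1 in Hz. subst z.
      destruct (Z_le_gt_dec (Z.of_nat i') (Z.of_nat i)); nia.
  - split; [|split; [|split]].
    + exists x, m. split; [auto | split; [auto | right; split; auto]].
    + exact Bl.
    + apply refinement_of_cut. replace (x + Z.of_nat m * l1 + zlen W2)%Z with (x + zlen long)%Z;
        [exact Se | rewrite LV; fold l2; lia].
    + intros z Hz Rz. destruct (refinement_inside x z long Hv Rz) as [i' [Hi' [_ Ez]]].
      { fold l2 in Hz. split; [nia|]. rewrite LV. lia. }
      fold l2 in Hz. subst z. nia.
Qed.

Lemma short_block_refines (x : Z) : cut_block f C x W1 -> cut_block f refinement x W1.
Proof.
  intros Hv. pose proof Hv as [Sx [Bx [Se Ie]]].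
  pose proof (zlen_pos W1 N1) as P1. pose proof (zlen_pos W2 N2) as P2. fold l1 l2 in P1, P2.
  split; [apply refinement_of_cut; auto | split; [auto | split; [apply refinement_of_cut; auto|]]].
  intros z Hz Rz. destruct (refinement_inside x z W1 Hv Rz Hz) as [i' [Hi' [Hv1 Ez]]].
  assert (E : long = W1) by exact (cut_block_unique f C x long W1 long_nonnil N1 Hv1 Hv).
  assert (zlen long = zlen W1) by (rewrite E; auto). rewrite zlen_long in H. fold l1 in H. nia.
Qed.

Lemma refinement_block (y : Z) : refinement y ->
  exists x (i : nat), C x /\ y = (x + Z.of_nat i * l1)%Z /\
  ((cut_block f C x long /\ (i < m)%nat /\ cut_block f refinement y W1) \/
   (cut_block f C x long /\ i = m /\ cut_block f refinement y W2) \/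
   (i = 0%nat /\ cut_block f C x W1 /\ cut_block f refinement y W1)).
Proof.
  intros [x [i [Cx [Ey Hi]]]]. exists x, i. split; [auto | split; [auto|]].
  assert (Hlong : cut_block f C x long -> (i <= m)%nat ->
    (cut_block f C x long /\ (i < m)%nat /\ cut_block f refinement y W1) \/
    (cut_block f C x long /\ i = m /\ cut_block f refinement y W2)).
  { intros hv hm. destruct (long_block_refines x hv) as [A B]. subst y.
    destruct (Nat.lt_ge_cases i m); [left | right; replace i with m by lia]; auto. }
  destruct Hi as [-> | [hm hv]]; [|destruct (Hlong hv hm); auto].
  destruct HS as [_ [Hblock _]]. destruct (Hblock x Cx) as [w [[-> | ->] Hw]].
  - destruct (Hlong Hw ltac:(lia)); auto.
  - right; right. split; [auto | split; [auto|]]. subst y. rewrite Z.add_0_r.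
    apply short_block_refines, Hw.
Qed.

Lemma block_start_before (T : Z -> Prop) (x : Z) (w : word) : cut_block f T x w -> w <> nil ->
  exists p, T p /\ (p < x + zlen w)%Z /\ forall z, (p < z < x + zlen w)%Z -> ~ T z.
Proof.
  intros [A [_ [_ D]]] N. exists x. pose proof (zlen_pos w N). split; [auto | split; [lia | auto]].
Qed.

Lemma refinement_cut_set : cut_set f W1 W2 refinement.
Proof.
  pose proof (zlen_pos W1 N1) as P1. pose proof (zlen_pos W2 N2) as P2. fold l1 l2 in P1, P2.
  split; [|split].
  - destruct HS as [[x Hx] _]. exists x. apply refinement_of_cut, Hx.
  - intros y Hy. destruct (refinement_block y Hy) as [x [i [_ [_ Hc]]]].
    destruct Hc as [[_ [_ T]]|[[_ [_ T]]|[_ [_ T]]]]; [exists W1 | exists W2 | exists W1]; auto.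
  - intros y [x [i [Cx [Ey Hi]]]]. destruct i as [|i].
    + rewrite Z.add_0_r in Ey. subst y.
      destruct HS as [_ [Hblock Hprev]]. destruct (Hprev x Cx) as [p [Cp [Hpx Ip]]].
      destruct (Hblock p Cp) as [w [Hw Tw]].
      assert (Nw : w <> nil) by (destruct Hw as [->| ->]; [exact long_nonnil | exact N1]).
      assert (Ep : (p + zlen w = x)%Z).
      { pose proof (cut_block_next _ _ _ _ _ Tw Cx Hpx). pose proof (zlen_pos w Nw).
        destruct (Z.eq_dec (p + zlen w) x); auto. exfalso. apply (Ip (p + zlen w)%Z); [lia | apply Tw]. }
      destruct Hw as [->| ->].
      * destruct (long_block_refines p Tw) as [_ B]. destruct (block_start_before _ _ _ B N2) as [q Hq].
        exists q. replace x with (p + Z.of_nat m * l1 + zlen W2)%Z; [exact Hq|].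
        rewrite <- Ep, zlen_long. fold l2. lia.
      * destruct (block_start_before _ _ _ (short_block_refines p Tw) N1) as [q Hq].
        exists q. rewrite <- Ep. exact Hq.
    + destruct Hi as [Hi|[hm hv]]; [discriminate|].
      destruct (long_block_refines x hv) as [A _].
      destruct (block_start_before _ _ _ (A i ltac:(lia)) N1) as [q Hq]. exists q.
      replace y with (x + Z.of_nat i * l1 + zlen W1)%Z; [exact Hq | subst y; fold l1; lia].
Qed.

Lemma cut_iff_coarse (x : Z) : W1 <> W2 -> C x <-> coarse_points f W1 W2 m refinement x.
Proof.
  intros D12. pose proof (zlen_pos W1 N1) as P1. pose proof (zlen_pos W2 N2) as P2.
  fold l1 l2 in P1, P2. unfold coarse_points. fold l1. split.
  - intros Cx. split; [apply refinement_of_cut, Cx|]. intros [k [Hk Tk]].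
    destruct (refinement_block _ (proj1 Tk)) as [g [i [Cg [Ey Hc]]]].
    destruct Hc as [[_ [_ T]]|[[Tv [-> T]]|[_ [_ T]]]];
      try (apply D12, (cut_block_unique f refinement (x + Z.of_nat k * l1)); auto; fail).
    assert (Hgx : (g < x)%Z) by nia.
    pose proof (cut_block_next _ _ _ _ _ Tv Cx Hgx). rewrite zlen_long in H. fold l2 in H. lia.
  - intros [[g [i [Cg [Ex Hi]]]] Nc]. apply NNPP. intros NCx. apply Nc.
    destruct Hi as [-> | [hm hv]]; [rewrite Z.add_0_r in Ex; subst; contradiction|].
    destruct i as [|i]; [rewrite Z.add_0_r in Ex; subst; contradiction|].
    exists (m - Datatypes.S i)%nat. split; [lia|].
    destruct (long_block_refines g hv) as [_ B].
    replace (x + Z.of_nat (m - Datatypes.S i) * l1)%Z with (g + Z.of_nat m * l1)%Z;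
      [exact B | subst x; nia].
Qed.

End Refinement.

Lemma cut_set_unique_step (f : Z -> nat) (W1 W2 : word) (m : nat) :
  W1 <> nil -> W2 <> nil -> W1 <> W2 ->
  (forall T1 T2, cut_set f W1 W2 T1 -> cut_set f W1 W2 T2 -> forall x, T1 x <-> T2 x) ->
  forall C1 C2, cut_set f (wpow W1 m ++ W2) W1 C1 -> cut_set f (wpow W1 m ++ W2) W1 C2 ->
  forall x, C1 x <-> C2 x.
Proof.
  intros N1 N2 D IH C1 C2 H1 H2 x.
  pose proof (IH _ _ (refinement_cut_set f W1 W2 m N1 N2 C1 H1)
                     (refinement_cut_set f W1 W2 m N1 N2 C2 H2)) as E.
  rewrite (cut_iff_coarse f W1 W2 m N1 N2 C1 H1 x D), (cut_iff_coarse f W1 W2 m N1 N2 C2 H2 x D).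
  unfold coarse_points.
  assert (Ecut : forall y w, cut_block f (refinement f W1 W2 m C1) y w ->
                            cut_block f (refinement f W1 W2 m C2) y w)
    by (intros y w; apply cut_block_ext; intros z; apply E).
  assert (Ecut' : forall y w, cut_block f (refinement f W1 W2 m C2) y w ->
                             cut_block f (refinement f W1 W2 m C1) y w)
    by (intros y w; apply cut_block_ext; intros z; split; apply E).
  split; intros [A B]; split; [apply E, A | | apply E, A |];
    intros [k [Hk Tk]]; apply B; exists k; auto.
Qed.

Lemma cut_set_letters_full (f : Z -> nat) (W1 W2 : word) (C : Z -> Prop) :
  length W1 = 1%nat -> length W2 = 1%nat -> cut_set f W1 W2 C -> forall x, C x.
Proof.
  intros L1 L2 [[x0 H0] [Hblock Hprev]].
  assert (Up : forall x, C x -> C (x + 1)%Z).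
  { intros x Hx. destruct (Hblock x Hx) as [w [Hw [_ [_ [E _]]]]]. unfold zlen in E.
    destruct Hw; subst; rewrite ?L1, ?L2 in E; exact E. }
  assert (Down : forall x, C x -> C (x - 1)%Z).
  { intros y Hy. destruct (Hprev y Hy) as [p [Cp [Hpy Ip]]].
    destruct (Z.eq_dec p (y - 1)) as [<-|e]; [exact Cp|].
    exfalso. apply (Ip (p + 1)%Z); [lia | apply Up, Cp]. }
  intros x. destruct (Z_le_gt_dec x0 x).
  - replace x with (x0 + Z.of_nat (Z.to_nat (x - x0)))%Z by lia.
    induction (Z.to_nat (x - x0)) as [|n IH]; [rewrite Z.add_0_r; exact H0|].
    replace (x0 + Z.of_nat (S n))%Z with (x0 + Z.of_nat n + 1)%Z by lia. apply Up, IH.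
  - replace x with (x0 - Z.of_nat (Z.to_nat (x0 - x)))%Z by lia.
    induction (Z.to_nat (x0 - x)) as [|n IH]; [rewrite Z.sub_0_r; exact H0|].
    replace (x0 - Z.of_nat (S n))%Z with (x0 - Z.of_nat n - 1)%Z by lia. apply Down, IH.
Qed.

Lemma cut_set_unique (alpha : R) (f : Z -> nat) (n : nat) (C1 C2 : Z -> Prop) :
  cut_set f (s alpha n) (s_prev alpha n) C1 -> cut_set f (s alpha n) (s_prev alpha n) C2 ->
  forall x, C1 x <-> C2 x.
Proof.
  revert C1 C2. induction n as [|n IH]; intros C1 C2 H1 H2 x.
  - split; intros _; [exact (cut_set_letters_full f (s alpha 0) (s_prev alpha 0) C2 eq_refl eq_refl H2 x)
                     | exact (cut_set_letters_full f (s alpha 0) (s_prev alpha 0) C1 eq_refl eq_refl H1 x)].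
  - destruct (s_succ alpha n) as [E1 E2]. rewrite E1, E2 in H1, H2.
    destruct (s_spec alpha n) as [N1 [N2 _]].
    exact (cut_set_unique_step f _ _ _ N1 N2 (s_neq_s_prev alpha n) IH C1 C2 H1 H2 x).
Qed.

Lemma partition_cut_set (n : nat) (alpha : R) (f : Z -> nat) (d : Z -> Z) (z : Z -> word) :
  is_partition n alpha f d z -> cut_set f (s alpha n) (s_prev alpha n) (fun x => exists j, d j = x).
Proof.
  intros [Hinc [Hz [H0 Hb]]]. pose proof (lt_of_succ_lt d Hinc) as Hlt.
  assert (Free : forall j y, (d j < y < d (j + 1))%Z -> ~ exists k, d k = y).
  { intros j y Hy [k <-]. destruct (Z.lt_trichotomy k j) as [h|[->|h]].
    - pose proof (Hlt k j h). lia.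
    - lia.
    - destruct (Z.eq_dec k (j + 1)) as [->|]; [lia|]. pose proof (Hlt (j + 1)%Z k ltac:(lia)). lia. }
  split; [|split].
  - exists (d 0%Z), 0%Z. reflexivity.
  - intros x [j <-]. exists (z j). split; [destruct (Hz j); auto|].
    destruct (Hb j) as [L B]. unfold cut_block. fold (zlen (z j)) in L. rewrite L.
    split; [eauto | split; [exact B | split; [exists (j + 1)%Z; lia|]]].
    intros y Hy. apply (Free j). lia.
  - intros y [j <-]. exists (d (j - 1)%Z). pose proof (Hinc (j - 1)%Z) as Hj.
    replace (j - 1 + 1)%Z with j in Hj by lia. split; [eauto | split; [exact Hj|]].
    intros y Hy. apply (Free (j - 1)%Z). replace (j - 1 + 1)%Z with j by lia. exact Hy.
Qed.

Lemma succ_le_of_range (d : Z -> Z) (j y : Z) : (forall i, d i < d (i + 1))%Z ->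
  (exists k, d k = y) -> (d j < y)%Z -> (d (j + 1) <= y)%Z.
Proof.
  intros Hinc [k <-] Hjk. destruct (Z_le_gt_dec k j).
  - pose proof (le_of_succ_lt d Hinc k j ltac:(lia)). lia.
  - apply (le_of_succ_lt d Hinc). lia.
Qed.

Lemma enumeration_unique (d d' : Z -> Z) :
  (forall j, d j < d (j + 1))%Z -> (forall j, d' j < d' (j + 1))%Z ->
  (d 0 <= 0 < d 1)%Z -> (d' 0 <= 0 < d' 1)%Z ->
  (forall x, (exists j, d j = x) <-> (exists j, d' j = x)) -> forall j, d j = d' j.
Proof.
  intros I I' H0 H0' E.
  assert (In : forall j, exists k, d' k = d j) by (intros j; apply E; eauto).
  assert (In' : forall j, exists k, d k = d' j) by (intros j; apply E; eauto).
  assert (Up : forall j, d j = d' j -> d (j + 1)%Z = d' (j + 1)%Z).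
  { intros j h. pose proof (succ_le_of_range d' j _ I' (In (j + 1)%Z) ltac:(specialize (I j); lia)).
    pose proof (succ_le_of_range d j _ I (In' (j + 1)%Z) ltac:(specialize (I' j); lia)). lia. }
  assert (Down : forall j, d j = d' j -> d (j - 1)%Z = d' (j - 1)%Z).
  { intros j h. pose proof (I (j - 1)%Z). pose proof (I' (j - 1)%Z).
    replace (j - 1 + 1)%Z with j in * by lia.
    destruct (Z.lt_total (d (j - 1)%Z) (d' (j - 1)%Z)) as [h'|[h'|h']]; auto; exfalso.
    - pose proof (succ_le_of_range d (j - 1) _ I (In' (j - 1)%Z) h').
      replace (j - 1 + 1)%Z with j in * by lia. lia.
    - pose proof (succ_le_of_range d' (j - 1) _ I' (In (j - 1)%Z) h').
      replace (j - 1 + 1)%Z with j in * by lia. lia. }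
  assert (Base : d 0%Z = d' 0%Z).
  { destruct (Z.lt_total (d 0%Z) (d' 0%Z)) as [h|[h|h]]; auto; exfalso.
    - pose proof (succ_le_of_range d 0 _ I (In' 0%Z) h). simpl in *. lia.
    - pose proof (succ_le_of_range d' 0 _ I' (In 0%Z) h). simpl in *. lia. }
  intros j. induction j as [|j IH|j IH] using Z.peano_ind; auto.
  - rewrite <- Z.add_1_r. auto.
  - rewrite <- Z.sub_1_r. auto.
Qed.

Lemma partition_unique (n : nat) (alpha : R) (f : Z -> nat) (d d' : Z -> Z) (z z' : Z -> word) :
  is_partition n alpha f d z -> is_partition n alpha f d' z' ->
  (forall j, d j = d' j) /\ (forall j, z j = z' j).
Proof.
  intros P P'.
  pose proof (cut_set_unique alpha f n _ _ (partition_cut_set _ _ _ _ _ P)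
                                           (partition_cut_set _ _ _ _ _ P')) as E.
  destruct P as [I [_ [H0 B]]], P' as [I' [_ [H0' B']]].
  assert (Ed : forall j, d j = d' j) by (apply enumeration_unique; auto).
  split; auto. intros j. destruct (B j) as [L1 B1], (B' j) as [L2 B2].
  apply (reads_ext f (d j)); [exact B1 | rewrite Ed; exact B2 | rewrite !Ed in L1; lia].
Qed.

Theorem lemma3p2 (alpha : R) (Ha : 0 < alpha < 1) (Hirr : irrational alpha) :
  (forall n : nat, unique_partition n alpha (v alpha 0)) /\
  (forall (n : nat) (theta : R), 0 <= theta < 1 ->
     unique_partition n alpha (v alpha theta)).
Proof.
  assert (Hunique : forall n theta, unique_partition n alpha (v alpha theta)).
  { intros n theta. split; [exact (partition_exists alpha Ha Hirr theta n)|].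
    intros d z d' z'. apply partition_unique. }
  split; intros; apply Hunique.
Qed.
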